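(* There is a faithful functor $\Phi\colon\Delta R^{op}\to\mathcal{I}\Gamma(as)$, the identity on objects, such that for all $n$: $\Phi$ sends the (opposite of the) coface $\delta_i\colon[n-1]\to[n]$ ($0\leqslant i\leqslant n$) to $d_i\colon[n]\to[n-1]$, the (opposite of the) codegeneracy $\sigma_j\colon[n+1]\to[n]$ ($0\leqslant j\leqslant n$) to $s_j\colon[n]\to[n+1]$, and the (opposite of the) reflection $r_n$ of $[n]$ to $\rho_n$. Consequently $\Delta R^{op}$ is isomorphic to the subcategory $\mathcal{R}$ of $\mathcal{I}\Gamma(as)$ generated by the morphisms $d_i$, $s_j$, $\rho_n$.
   Context: Let $C_2=\{1,t\}$ and $[n]=\{0,\dots,n\}$. The category $\mathcal{IF}(as)$ has objects $[n]$; a morphism $f\colon[n]\to[m]$ is a map of sets with a total order on each fibre $f^{-1}(i)$ and a label in $C_2$ on each element of $[n]$ (written $j^\alpha$). For $S=\{j_1^{\alpha_1}<\cdots<j_r^{\alpha_r}\}$ put $1\ast S=S$, $t\ast S=\{j_r^{t\alpha_r}<\cdots<j_1^{t\alpha_1}\}$; the composite of $f\colon[n]\to[m]$, $g\colon[m]\to[p]$ has underlying map $g\circ f$ and fibres $(g\circ f)^{-1}(i)=\coprod_{j^\alpha\in g^{-1}(i)}\alpha\ast f^{-1}(j)$ (ordered disjoint union). $\mathcal{I}\Gamma(as)$ is the subcategory of morphisms with $f(0)=0$. Morphisms of $\mathcal{I}\Gamma(as)$ (all labels $1$ unless stated): for $n\geqslant1$ and $0\leqslant i\leqslant n-1$,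 $d_i\colon[n]\to[n-1]$ sends $j\mapsto j$ ($j\leqslant i$), $j\mapsto j-1$ ($j>i$), with fibre over $i$ equal to $\{i<i+1\}$; $d_n\colon[n]\to[n-1]$ sends $j\mapsto j$ ($j<n$), $n\mapsto0$, with fibre over $0$ equal to $\{n<0\}$; for $0\leqslant j\leqslant n$, $s_j\colon[n]\to[n+1]$ sends $k\mapsto k$ ($k\leqslant j$), $k\mapsto k+1$ ($k>j$), so the fibre over $j+1$ is empty; $\rho_n\colon[n]\to[n]$ sends $0\mapsto 0$ and $k\mapsto n+1-k$ for $1\leqslant k\leqslant n$, with all labels equal to $t$. The reflexive category $\Delta R$ has objects $[n]$; a morphism $[n]\to[m]$ is a pair $(\phi,g)$ with $\phi\colon[n]\to[m]$ order-preserving and $g\in\{1,r_n\}$, where $r_n(i)=n-i$; composition is $(\psi,1)\circ(\phi,g)=(\psi\circ\phi,g)$ and $(\psi,r_m)\circ(\phi,g)=(\psi\circ\phi',r_ng)$ where $\phi'(i)=m-\phi(n-i)$; $r_n^2=1$. Here $\delta_i\colon[n-1]\to[n]$ is the order-preserving injection missing $i$, $\sigma_j\colon[n+1]\to[n]$ the order-preserving surjection with $\sigma_j(j)=\sigma_j(j+1)=j$, both regarded as $(\delta_i,1)$, $(\sigma_j,1)$, and the reflection is $(\mathrm{id},r_n)$. *)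

(* Objects [n] = {0,...,n} are modelled by 'I_n.+1. *)
From mathcomp Require Import all_boot.
Set Implicit Arguments. Unset Strict Implicit. Unset Printing Implicit Defensive.

(* The category IF(as).  A morphism [n] -> [m]: underlying map, the    *)
(* ordered fibre over each i in [m] (as a sequence), and a label in    *)
(* C2 = {1,t} for each element of [n] (false = 1, true = t).           *)
Record IFhom (n m : nat) := IFHom {
  ifmap : {ffun 'I_n.+1 -> 'I_m.+1};
  iffib : {ffun 'I_m.+1 -> seq 'I_n.+1};
  iflab : {ffun 'I_n.+1 -> bool} }.

Definition IFvalid n m (f : IFhom n m) : Prop :=
  forall i : 'I_m.+1, uniq (iffib f i) /\
    forall j : 'I_n.+1, (j \in iffib f i) = (ifmap f j == i).

Definition IGvalid n m (f : IFhom n m) : Prop :=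
  IFvalid f /\ ifmap f ord0 = ord0.

Definition IFid n : IFhom n n :=
  IFHom [ffun i => i] [ffun i => [:: i]] [ffun _ => false].

Definition star n (alpha : bool) (S : seq 'I_n.+1) : seq 'I_n.+1 :=
  if alpha then rev S else S.

Definition IFcomp n m p (f : IFhom n m) (g : IFhom m p) : IFhom n p :=
  IFHom [ffun k => ifmap g (ifmap f k)]
        [ffun i => flatten [seq star (iflab g j) (iffib f j) | j <- iffib g i]]
        [ffun k => iflab g (ifmap f k) (+) iflab f k].

Definition natfib n m (f : 'I_n.+1 -> 'I_m.+1) : {ffun 'I_m.+1 -> seq 'I_n.+1} :=
  [ffun i => [seq j <- enum 'I_n.+1 | f j == i]].

Definition dmap k (i : 'I_k.+2) (j : 'I_k.+2) : 'I_k.+1 :=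
  if i == ord_max then (if j == ord_max then ord0 else inord j)
  else inord (if j <= i then val j else (val j).-1).

Definition dface k (i : 'I_k.+2) : IFhom k.+1 k :=
  IFHom [ffun j => dmap i j]
        (if i == ord_max then
           [ffun l => if l == ord0 then [:: ord_max; ord0] else natfib (dmap i) l]
         else natfib (dmap i))
        [ffun _ => false].

Definition smap n (j : 'I_n.+1) (k : 'I_n.+1) : 'I_n.+2 := lift (lift ord0 j) k.

Definition sdeg n (j : 'I_n.+1) : IFhom n n.+1 :=
  IFHom [ffun k => smap j k] (natfib (smap j)) [ffun _ => false].

Definition rhomap n (k : 'I_n.+1) : 'I_n.+1 :=
  if k == ord0 then ord0 else inord (n.+1 - k).

Definition rho n : IFhom n n :=
  IFHom [ffun k => rhomap k] (natfib (@rhomap n)) [ffun _ => true].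

Inductive Rgen : forall n m, IFhom n m -> Prop :=
  | Rgen_id n : Rgen (IFid n)
  | Rgen_d k (i : 'I_k.+2) : Rgen (dface i)
  | Rgen_s n (j : 'I_n.+1) : Rgen (sdeg j)
  | Rgen_rho n : Rgen (rho n)
  | Rgen_comp n m p (f : IFhom n m) (g : IFhom m p) :
      Rgen f -> Rgen g -> Rgen (IFcomp f g).

(* The reflexive category ΔR.  A morphism [n] -> [m] is (phi, g) with  *)
(* phi order preserving and g in {1, r_n} (drrev = true means r_n).    *)
Record DRhom (n m : nat) := DRHom {
  drphi : {ffun 'I_n.+1 -> 'I_m.+1};
  drrev : bool }.

Definition DRvalid n m (x : DRhom n m) : Prop :=
  forall i j : 'I_n.+1, i <= j -> drphi x i <= drphi x j.

Definition DRid n : DRhom n n := DRHom [ffun i => i] false.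

Definition DRcomp n m p (y : DRhom m p) (x : DRhom n m) : DRhom n p :=
  if drrev y then
    DRHom [ffun i => drphi y (rev_ord (drphi x (rev_ord i)))] (~~ drrev x)
  else DRHom [ffun i => drphi y (drphi x i)] (drrev x).

Definition delta k (i : 'I_k.+2) : DRhom k k.+1 := DRHom [ffun j => lift i j] false.

Definition sigma n (j : 'I_n.+1) : DRhom n.+1 n :=
  DRHom [ffun k : 'I_n.+2 => inord (unbump j k)] false.

Definition refl n : DRhom n n := DRHom [ffun i => i] true.

From mathcomp Require Import all_boot zify.
Set Implicit Arguments. Unset Strict Implicit. Unset Printing Implicit Defensive.

(* A monotone phi : [a] -> [b] has a dual [b] -> [a] in IΓ(as), and Phi sends
   (phi, 1) to the dual and (phi, r) to the dual followed by rho.  Extend phi to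
   the map  r + q(a+1) |-> phi r + q(b+1)  of nat; the fibre of the dual over l
   is the cyclic interval (phi (l-1), phi l] of [b], i.e. the interval between
   consecutive values of the extension read modulo b+1, where phi (-1) stands
   for phi a - (b+1).  Extensions compose, so the fibres of a composite dual
   are concatenations of consecutive intervals (functoriality); reversing [a]
   and [b] conjugates the dual by rho (the reflections); phi is recovered from
   the lengths of the fibres (faithfulness); and every monotone map is a
   composite of cofaces and codegeneracies (the image is generated by the d_i,
   s_j, rho_n). *)

Definition monotone a b (phi : {ffun 'I_a.+1 -> 'I_b.+1}) :=
  forall i j : 'I_a.+1, i <= j -> phi i <= phi j.

Definition plift a b (phi : {ffun 'I_a.+1 -> 'I_b.+1}) (x : nat) : nat :=
  phi (inord (x %% a.+1)) + (x %/ a.+1) * b.+1.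

Definition plift_fib a b (phi : {ffun 'I_a.+1 -> 'I_b.+1}) (x : nat) : seq nat :=
  [seq z %% b.+1 | z <- iota (plift phi x).+1 (plift phi x.+1 - plift phi x)].

(* Shifting by a puts the fibre over l between the lifts of l - 1 and l. *)
Definition dual_fib a b (phi : {ffun 'I_a.+1 -> 'I_b.+1}) (l : nat) : seq nat :=
  plift_fib phi (l + a).

Section PeriodicLift.
Variables a b : nat.
Implicit Type phi : {ffun 'I_a.+1 -> 'I_b.+1}.

Lemma monotone_inord phi x y : monotone phi -> x <= y -> y <= a ->
  phi (inord x) <= phi (inord y).
Proof. by move=> hm hxy hy; apply: hm; rewrite !inordK //; lia. Qed.

Lemma pliftE phi r q : r < a.+1 ->
  plift phi (r + q * a.+1) = phi (inord r) + q * b.+1.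
Proof.
move=> hr; rewrite /plift [r + _]addnC modnMDl divnMDl // modn_small // divn_small //.
by rewrite addn0.
Qed.

Lemma pliftD phi x q : plift phi (x + q * a.+1) = plift phi x + q * b.+1.
Proof.
have -> : x = x %% a.+1 + x %/ a.+1 * a.+1 by rewrite addnC -divn_eq.
by rewrite -addnA -mulnDl !pliftE ?ltn_pmod // mulnDl addnA.
Qed.

Lemma plift_leS phi x : monotone phi -> plift phi x <= plift phi x.+1.
Proof.
move=> hm; rewrite (divn_eq x a.+1) addnC.
set q := x %/ a.+1; set r := x %% a.+1.
have hr : r < a.+1 by rewrite ltn_pmod.
rewrite pliftE //; have [ra|ra] := ltnP r a.
  by rewrite -addSn pliftE // leq_add2r monotone_inord.
have -> : (r + q * a.+1).+1 = 0 + q.+1 * a.+1 by rewrite mulSn; lia.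
rewrite pliftE // mulSn; have := ltn_ord (phi (inord r)); lia.
Qed.

Lemma plift_homo phi : monotone phi -> {homo plift phi : x y / x <= y}.
Proof.
move=> hm; apply: (homo_leq (r := leq)) => [//|???|x]; first exact: leq_trans.
exact: plift_leS.
Qed.

End PeriodicLift.

Lemma plift_comp a b c (phi : {ffun 'I_a.+1 -> 'I_b.+1}) (psi : {ffun 'I_b.+1 -> 'I_c.+1}) x :
  plift psi (plift phi x) = plift [ffun i => psi (phi i)] x.
Proof.
rewrite (divn_eq x a.+1) addnC !pliftE ?ltn_pmod ?ltn_ord //.
by rewrite inord_val ffunE.
Qed.

Lemma map_modn_iota_small M s c : s + c <= M -> [seq z %% M | z <- iota s c] = iota s c.
Proof.
move=> h; rewrite -[RHS]map_id; apply/eq_in_map => z; rewrite mem_iota => hz.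
apply: modn_small; lia.
Qed.

Lemma map_modn_iota_shift M s c q :
  [seq z %% M | z <- iota (s + q * M) c] = [seq z %% M | z <- iota s c].
Proof. by rewrite addnC iotaDl -map_comp; apply: eq_map => z /=; rewrite modnMDl. Qed.

Section DualFibres.
Variables a b : nat.
Implicit Type phi : {ffun 'I_a.+1 -> 'I_b.+1}.

Lemma plift_fibD phi x q : plift_fib phi (x + q * a.+1) = plift_fib phi x.
Proof.
by rewrite /plift_fib -addSn !pliftD subnDr -addSn map_modn_iota_shift.
Qed.

Lemma dual_fibE phi l : 0 < l <= a ->
  dual_fib phi l = iota (phi (inord l.-1)).+1 (phi (inord l) - phi (inord l.-1)).
Proof.
move=> hl; rewrite /dual_fib /plift_fib.
have -> : l + a = l.-1 + 1 * a.+1 by lia.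
have -> : (l.-1 + 1 * a.+1).+1 = l + 1 * a.+1 by lia.
rewrite !pliftE; try lia.
rewrite subnDr -addSn map_modn_iota_shift map_modn_iota_small //.
have := ltn_ord (phi (inord l)); have := ltn_ord (phi (inord l.-1)); lia.
Qed.

Lemma dual_fib0 phi : dual_fib phi 0 =
  iota (phi (inord a)).+1 (b - phi (inord a)) ++ iota 0 (phi (inord 0)).+1.
Proof.
rewrite /dual_fib /plift_fib.
have -> : 0 + a = a + 0 * a.+1 by lia.
have -> : (a + 0 * a.+1).+1 = 0 + 1 * a.+1 by lia.
rewrite !pliftE // mul0n addn0 mul1n.
have ha := ltn_ord (phi (inord a)).
have -> : phi (inord 0) + b.+1 - phi (inord a) =
          (b - phi (inord a)) + (phi (inord 0)).+1 by lia.
rewrite iotaD map_cat map_modn_iota_small; last by lia.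
have -> : (phi (inord a)).+1 + (b - phi (inord a)) = 0 + 1 * b.+1 by lia.
rewrite map_modn_iota_shift map_modn_iota_small //.
by have := ltn_ord (phi (inord 0)); lia.
Qed.

Lemma mem_dual_fib phi l k : l <= a -> k < b.+1 ->
  (k \in dual_fib phi l) = (if l == 0 then (phi (inord a) < k) || (k <= phi (inord 0))
                            else phi (inord l.-1) < k <= phi (inord l)).
Proof.
move=> hl hk; case: eqP => [->|l0]; last by rewrite dual_fibE ?mem_iota; lia.
by rewrite dual_fib0 mem_cat !mem_iota; apply/orP/orP => -[] h; [left|right|left|right]; lia.
Qed.

Lemma dual_fib_lt phi l z : z \in dual_fib phi l -> z < b.+1.
Proof. by case/mapP => y _ ->; rewrite ltn_pmod. Qed.

Lemma dual_fib_uniq phi l : monotone phi -> l <= a -> uniq (dual_fib phi l).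
Proof.
move=> hm hl; have [->|lp] := posnP l; last by rewrite dual_fibE ?iota_uniq //; lia.
rewrite dual_fib0 cat_uniq !iota_uniq andbT andTb.
have := monotone_inord hm (leq0n a) (leqnn a).
by move=> h; apply/hasPn => z; rewrite !mem_iota; lia.
Qed.

Lemma dual_fib_disjoint phi k l1 l2 : monotone phi -> k < b.+1 -> l1 <= a -> l2 <= a ->
  k \in dual_fib phi l1 -> k \in dual_fib phi l2 -> l1 = l2.
Proof.
move=> hm hk h1 h2.
wlog lt12 : l1 l2 h1 h2 / l1 < l2.
  move=> W; case: (ltngtP l1 l2) => [lt|gt|->] // m1 m2; first exact: W.
  by symmetry; apply: W.
rewrite !mem_dual_fib //; case: eqP => [e1|ne1]; case: eqP => [e2|ne2]; try lia.
  move=> A /andP [B C].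
  have := monotone_inord hm (leq0n l2.-1) (leq_trans (leq_pred _) h2).
  have := monotone_inord hm h2 (leqnn a); lia.
move=> /andP [A B] /andP [C D].
have := @monotone_inord _ _ phi l1 l2.-1 hm ltac:(lia) ltac:(lia); lia.
Qed.

End DualFibres.

(* The index of the dual fibre containing k: the least l with k <= phi l, or 0
   if k exceeds every phi l (then k lies in the wrap-around fibre over 0). *)
Definition dual_index a b (phi : {ffun 'I_a.+1 -> 'I_b.+1}) (k : nat) : nat :=
  let l := find (fun l => k <= phi (inord l)) (iota 0 a.+1) in
  if l == a.+1 then 0 else l.

Definition IFdual a b (phi : {ffun 'I_a.+1 -> 'I_b.+1}) : IFhom b a :=
  IFHom [ffun k : 'I_b.+1 => inord (dual_index phi k)]
        [ffun l : 'I_a.+1 => map inord (dual_fib phi l)] [ffun _ => false].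

Definition fib_preim n m (f : IFhom n m) :=
  forall i j, (j \in iffib f i) = (ifmap f j == i).

Lemma mem_map_inord n (s : seq nat) (j : 'I_n.+1) :
  (forall z, z \in s -> z < n.+1) -> (j \in map (@inord n) s) = (val j \in s).
Proof.
move=> h; apply/mapP/idP => [[z hz ->]|hj]; first by rewrite /= inordK ?h.
by exists (val j); rewrite ?inord_val.
Qed.

Section DualIndex.
Variables a b : nat.
Implicit Type phi : {ffun 'I_a.+1 -> 'I_b.+1}.

Lemma dual_index_le phi k : dual_index phi k <= a.
Proof.
rewrite /dual_index; case: eqP => // h.
have := find_size (fun l => k <= phi (inord l)) (iota 0 a.+1).
rewrite size_iota; lia.
Qed.

Lemma mem_dual_fib_index phi k : k < b.+1 -> k \in dual_fib phi (dual_index phi k).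
Proof.
move=> hk; rewrite /dual_index.
set p := fun l => k <= phi (inord l); set c := find p _.
have hc : c <= a.+1 by rewrite -[a.+1](size_iota 0) find_size.
have has_p : has p (iota 0 a.+1) = (c < a.+1) by rewrite has_find size_iota.
case: eqP => [ec|nc].
  rewrite mem_dual_fib //=.
  move: has_p; rewrite ec ltnn => /negbT/hasPn/(_ a).
  by rewrite mem_iota leqnn /p -ltnNge => ->.
have hca : c < a.+1 by lia.
have hkc : k <= phi (inord c).
  by move: (nth_find 0 (etrans has_p hca)); rewrite -/c nth_iota.
rewrite mem_dual_fib; try lia.
case: eqP => [c0|c0]; first by rewrite -c0 hkc orbT.
rewrite hkc andbT ltnNge.
have := @before_find _ 0 p (iota 0 a.+1) c.-1.
rewrite -/c nth_iota ?add0n /p; last by lia.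
by move=> ->; lia.
Qed.

Lemma dual_indexP phi k l : monotone phi -> k < b.+1 -> l <= a ->
  (dual_index phi k == l) = (k \in dual_fib phi l).
Proof.
move=> hm hk hl; apply/eqP/idP => [<-|h]; first exact: mem_dual_fib_index.
apply: (dual_fib_disjoint hm hk (dual_index_le _ _) hl) => //.
exact: mem_dual_fib_index.
Qed.

Lemma IFdual_fib_preim phi : monotone phi -> fib_preim (IFdual phi).
Proof.
move=> hm i j; rewrite /= !ffunE mem_map_inord => [|z]; last exact: dual_fib_lt.
have hi : val i <= a by rewrite -ltnS ltn_ord.
by rewrite -(inj_eq val_inj) /= inordK ?ltnS ?dual_index_le ?(dual_indexP hm _ hi).
Qed.

Lemma IFdual_uniq phi i : monotone phi -> uniq (iffib (IFdual phi) i).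
Proof.
move=> hm; have hi : val i <= a by rewrite -ltnS ltn_ord.
rewrite /= ffunE map_inj_in_uniq ?dual_fib_uniq // => x y hx hy /(congr1 val).
by rewrite /= !inordK //; [apply: dual_fib_lt hy | apply: dual_fib_lt hx].
Qed.

End DualIndex.

Lemma IFhomE n m (f : IFhom n m) : f = IFHom (ifmap f) (iffib f) (iflab f).
Proof. by case: f. Qed.

Lemma mem_star n b (s : seq 'I_n.+1) x : (x \in star b s) = (x \in s).
Proof. by case: b; rewrite /star ?mem_rev. Qed.

Lemma fib_preim_comp n m p (f : IFhom n m) (g : IFhom m p) :
  fib_preim f -> fib_preim g -> fib_preim (IFcomp f g).
Proof.
move=> hf hg i k; rewrite /IFcomp /= !ffunE.
apply/flatten_mapP/eqP => [[l hl]|<-].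
  by move: hl; rewrite hg => /eqP <-; rewrite mem_star hf => /eqP ->.
by exists (ifmap f k); rewrite ?mem_star ?hf ?hg.
Qed.

Lemma fib_preim_id n : fib_preim (IFid n).
Proof. by move=> i j; rewrite /= !ffunE inE. Qed.

Lemma fib_preim_ifmap n m (f g : IFhom n m) : fib_preim f -> fib_preim g ->
  iffib f = iffib g -> ifmap f = ifmap g.
Proof. by move=> hf hg E; apply/ffunP => k; apply/eqP; rewrite eq_sym -hg -E hf. Qed.

Lemma flatten_flatten T (sss : seq (seq (seq T))) :
  flatten (flatten sss) = flatten (map flatten sss).
Proof. by elim: sss => //= ss sss IH; rewrite flatten_cat IH. Qed.

Lemma IFcompA n m p q (f : IFhom n m) (g : IFhom m p) (h : IFhom p q) :
  fib_preim g -> IFcomp (IFcomp f g) h = IFcomp f (IFcomp g h).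
Proof.
move=> hg; rewrite /IFcomp /=; congr IFHom; apply/ffunP => x; rewrite !ffunE //; last first.
  by rewrite addbA.
under eq_map => j do rewrite ffunE.
rewrite map_flatten flatten_flatten -!map_comp; congr flatten; apply: eq_map => j /=.
rewrite (_ : map _ (star _ _) = map (fun l => star (iflab h j (+) iflab g l) (iffib f l))
                                  (star (iflab h j) (iffib g j))); last first.
  by apply/eq_in_map => l; rewrite mem_star hg => /eqP <-; rewrite ffunE.
case: (iflab h j) => /=; last by congr flatten; apply: eq_map.
rewrite rev_flatten /star map_rev -map_comp; congr (flatten (rev _)).
by apply: eq_map => l /=; case: (iflab g l); rewrite ?revK.
Qed.

Lemma IFcompf1 n m (f : IFhom n m) : IFcomp f (IFid m) = f.
Proof.
rewrite [RHS]IFhomE /IFcomp /=; congr IFHom; apply/ffunP => x; rewrite !ffunE //=.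
by rewrite ffunE cats0.
Qed.

Lemma IFcomp1f n m (g : IFhom n m) : IFcomp (IFid n) g = g.
Proof.
rewrite [RHS]IFhomE /IFcomp /=; congr IFHom; apply/ffunP => x; rewrite !ffunE ?addbF //=.
rewrite -[RHS]flatten_seq1; congr flatten; apply: eq_map => j.
by rewrite ffunE; case: (iflab g j).
Qed.

Lemma natfib_mem n m (f : 'I_n.+1 -> 'I_m.+1) i j : (j \in natfib f i) = (f j == i).
Proof. by rewrite /natfib ffunE mem_filter mem_enum andbT. Qed.

Section Reflection.
Variable n : nat.

Lemma rhomap_val (k : 'I_n.+1) : val (rhomap k) = (n.+1 - k) %% n.+1.
Proof.
rewrite /rhomap; case: eqP => [->|k0]; first by rewrite subn0 modnn.
have hk : 0 < (k : nat) by rewrite lt0n; apply/eqP => h; apply: k0; apply: val_inj.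
by rewrite /= inordK ?modn_small //; have := ltn_ord k; lia.
Qed.

Lemma rhomapK : involutive (@rhomap n).
Proof.
move=> k; apply: val_inj; rewrite !rhomap_val /=.
have := ltn_ord k; have [->|kp] := posnP (k : nat) => h.
  by rewrite subn0 modnn subn0 modnn.
rewrite (modn_small (_ : n.+1 - k < n.+1)); last by lia.
by rewrite (_ : n.+1 - (n.+1 - k) = k) ?modn_small //; lia.
Qed.

Lemma natfib_rho (j : 'I_n.+1) : natfib (@rhomap n) j = [:: rhomap j].
Proof.
rewrite /natfib ffunE (eq_filter (a2 := pred1 (rhomap j))).
  by rewrite filter_pred1_uniq ?enum_uniq ?mem_enum.
by move=> k /=; apply/eqP/eqP => [<-|->]; rewrite rhomapK.
Qed.

Lemma fib_preim_rho : fib_preim (rho n).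
Proof. by move=> i j; rewrite /= natfib_mem ffunE. Qed.

Lemma rhoK : IFcomp (rho n) (rho n) = IFid n.
Proof.
rewrite /IFcomp /IFid /=; congr IFHom; apply/ffunP => x.
- by rewrite !ffunE rhomapK.
- by rewrite ffunE natfib_rho /= ffunE natfib_rho /= rhomapK ffunE.
- by rewrite !ffunE.
Qed.

End Reflection.

Lemma flatten_iota_telescope (F : nat -> nat) s L : (forall z, F z <= F z.+1) ->
  flatten [seq iota (F z).+1 (F z.+1 - F z) | z <- iota s L] =
  iota (F s).+1 (F (s + L) - F s).
Proof.
move=> hF; have homoF : {homo F : x y / x <= y}.
  by apply: (homo_leq (r := leq)) => // ???; apply: leq_trans.
elim: L => [|L IH]; first by rewrite addn0 subnn.
rewrite -addn1 iotaD map_cat flatten_cat IH /= cats0 addn1 addnS.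
have := homoF s (s + L) (leq_addr _ _); have := hF (s + L) => h2 h1.
rewrite (_ : F (s + L).+1 - F s = (F (s + L) - F s) + (F (s + L).+1 - F (s + L))).
  by rewrite iotaD; congr (_ ++ iota _ _); lia.
lia.
Qed.

Section Composition.
Variables a b c : nat.
Variables (phi : {ffun 'I_a.+1 -> 'I_b.+1}) (psi : {ffun 'I_b.+1 -> 'I_c.+1}).
Hypotheses (mono_phi : monotone phi) (mono_psi : monotone psi).

Let psiphi := [ffun k => psi (phi k)].

Lemma monotone_comp : monotone psiphi.
Proof. by move=> i j hij; rewrite !ffunE; apply/mono_psi/mono_phi. Qed.

Lemma dual_fib_modn z : dual_fib psi (z %% b.+1) = plift_fib psi (z + b).
Proof.
have -> : z + b = z %% b.+1 + b + z %/ b.+1 * b.+1 by rewrite {1}(divn_eq z b.+1); lia.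
by rewrite /dual_fib plift_fibD.
Qed.

(* The fibre of a composite is the concatenation of the consecutive intervals
   of the lift of psi between the lifted values of phi, which telescopes. *)
Lemma dual_fib_comp i :
  flatten [seq dual_fib psi l | l <- dual_fib phi i] = dual_fib psiphi i.
Proof.
rewrite {1}/dual_fib /plift_fib -map_comp.
set s := (plift phi (i + a)).+1; set L := plift phi (i + a).+1 - plift phi (i + a).
pose F z := plift psi (z + b).
rewrite (eq_map dual_fib_modn) -/F.
rewrite (_ : flatten _ = [seq z %% c.+1 | z <- flatten
          [seq iota (F z).+1 (F z.+1 - F z) | z <- iota s L]]); last first.
  by rewrite map_flatten -map_comp.
rewrite flatten_iota_telescope => [|z]; last by apply: (plift_homo mono_psi); lia.
have -> : s + L = (plift phi (i + a).+1).+1 by have := plift_leS (i + a) mono_phi; lia.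
have FS x : F (plift phi x).+1 = plift psiphi x + 1 * c.+1.
  rewrite /F (_ : _.+1 + b = plift phi x + 1 * b.+1); last by lia.
  by rewrite (pliftD psi (plift phi x)) plift_comp.
by rewrite /s !FS subnDr -addSn map_modn_iota_shift.
Qed.

Lemma IFdual_comp : IFdual psiphi = IFcomp (IFdual psi) (IFdual phi).
Proof.
have fibE : iffib (IFdual psiphi) = iffib (IFcomp (IFdual psi) (IFdual phi)).
  apply/ffunP => i; rewrite /= !ffunE -dual_fib_comp -map_comp map_flatten -map_comp.
  congr flatten; apply/eq_in_map => z hz /=.
  by rewrite !ffunE /= inordK //; apply: dual_fib_lt hz.
rewrite [LHS]IFhomE [RHS]IFhomE; congr IFHom => //; last first.
  by apply/ffunP => k; rewrite !ffunE.
apply: fib_preim_ifmap fibE; first exact/IFdual_fib_preim/monotone_comp.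
by apply: fib_preim_comp; apply: IFdual_fib_preim.
Qed.

End Composition.

Lemma map_subn_iota K s L : s + L <= K.+1 ->
  [seq K - z | z <- iota s L] = rev (iota (K.+1 - s - L) L).
Proof.
elim: L s => [|L IH] s h //=; rewrite IH; last by lia.
set t := K.+1 - s - L.+1.
have -> : t :: iota t.+1 L = iota t L ++ [:: t + L].
  by rewrite -[t :: _]/(iota t L.+1) -addn1 iotaD.
by rewrite rev_cat /=; congr (_ :: rev (iota _ _)); rewrite /t; lia.
Qed.

Definition rev_conj a b (phi : {ffun 'I_a.+1 -> 'I_b.+1}) : {ffun 'I_a.+1 -> 'I_b.+1} :=
  [ffun i => rev_ord (phi (rev_ord i))].

Section ReversalConjugation.
Variables (a b : nat) (phi : {ffun 'I_a.+1 -> 'I_b.+1}).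
Hypothesis mono_phi : monotone phi.

Let phi_le x : phi (inord x) <= b.
Proof. by rewrite -ltnS ltn_ord. Qed.

Lemma monotone_rev_conj : monotone (rev_conj phi).
Proof.
move=> i j hij; rewrite !ffunE /=.
have : phi (rev_ord j) <= phi (rev_ord i) by apply: mono_phi; rewrite /=; lia.
have := ltn_ord (phi (rev_ord j)); have := ltn_ord (phi (rev_ord i)); lia.
Qed.

Lemma rev_conj_inord x : x <= a -> val (rev_conj phi (inord x)) = b - phi (inord (a - x)).
Proof.
move=> hx; rewrite ffunE /=.
by rewrite (_ : rev_ord _ = inord (a - x)) //; apply: val_inj; rewrite /= !inordK; lia.
Qed.

Lemma map_modn_subn_iota s L : 0 < s -> s + L <= b.+1 ->
  [seq (b.+1 - z) %% b.+1 | z <- iota s L] = rev (iota (b.+1 - s - L).+1 L).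
Proof.
move=> hs hsL; rewrite (_ : [seq _ | z <- _] = [seq b.+1 - z | z <- iota s L]).
  by rewrite map_subn_iota; [congr (rev (iota _ _)) | ]; lia.
by apply/eq_in_map => z; rewrite mem_iota => hz; rewrite modn_small //; lia.
Qed.

Lemma rev_dual_fib0 : [seq (b.+1 - z) %% b.+1 | z <- dual_fib phi 0] =
  rev (dual_fib (rev_conj phi) 0).
Proof.
rewrite !dual_fib0 map_cat !rev_conj_inord // subnn subn0.
have h0 := phi_le 0; have ha := phi_le a.
rewrite map_modn_subn_iota; try lia.
rewrite /= subn0 modnn map_modn_subn_iota; try lia.
rewrite rev_cat rev_cons cat_rcons.
by congr (rev (iota _ _) ++ _ :: rev (iota _ _)); lia.
Qed.

Lemma rev_dual_fibE i : 0 < i <= a -> [seq (b.+1 - z) %% b.+1 | z <- dual_fib phi i] =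
  rev (dual_fib (rev_conj phi) (a.+1 - i)).
Proof.
move=> hi; rewrite !dual_fibE ?rev_conj_inord; try lia.
have -> : a - (a.+1 - i).-1 = i by lia.
have -> : a - (a.+1 - i) = i.-1 by lia.
have := monotone_inord mono_phi (leq_pred i) (proj2 (andP hi)).
have := phi_le i => h1 h2.
by rewrite map_modn_subn_iota; try lia; congr (rev (iota _ _)); lia.
Qed.

Lemma IFdual_rev_conj : IFcomp (rho b) (IFdual phi) = IFcomp (IFdual (rev_conj phi)) (rho a).
Proof.
have fibE : iffib (IFcomp (rho b) (IFdual phi)) = iffib (IFcomp (IFdual (rev_conj phi)) (rho a)).
  apply/ffunP => i; rewrite /IFcomp /= ffunE.
  rewrite [RHS]ffunE natfib_rho /= cats0 !ffunE /star /=.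
  rewrite (_ : [seq _ | j <- _] = [seq [:: rhomap j] | j <- [seq inord z | z <- dual_fib phi i]]);
    last by apply: eq_map => j; rewrite natfib_rho ffunE.
  have hi : (i : nat) <= a by rewrite -ltnS ltn_ord.
  rewrite flatten_map1 -map_rev rhomap_val.
  have [i0|ip] := posnP (i : nat).
    rewrite i0 subn0 modnn -rev_dual_fib0 -!map_comp; apply/eq_in_map => z hz /=.
    by apply: val_inj; rewrite rhomap_val /= !inordK ?ltn_pmod //; apply: dual_fib_lt hz.
  rewrite modn_small -?rev_dual_fibE -?map_comp; try lia.
  apply/eq_in_map => z hz /=.
  by apply: val_inj; rewrite rhomap_val /= !inordK ?ltn_pmod //; apply: dual_fib_lt hz.
rewrite [LHS]IFhomE [RHS]IFhomE; congr IFHom => //; last first.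
  by apply/ffunP => k; rewrite !ffunE.
have preim_dual := IFdual_fib_preim mono_phi.
have preim_dual' := IFdual_fib_preim monotone_rev_conj.
by apply: fib_preim_ifmap fibE; apply: fib_preim_comp => //; apply: fib_preim_rho.
Qed.

End ReversalConjugation.

Definition Phi n m (x : DRhom m n) : IFhom n m :=
  if drrev x then IFcomp (IFdual (drphi x)) (rho m) else IFdual (drphi x).
Arguments Phi : clear implicits.

Lemma DRcomp_valid n m p (x : DRhom n m) (y : DRhom m p) :
  DRvalid x -> DRvalid y -> DRvalid (DRcomp y x).
Proof.
case: x => phi g; case: y => psi [] hx hy /= i j hij; rewrite /DRcomp !ffunE /=.
  by apply: hy; have := monotone_rev_conj hx hij; rewrite !ffunE.
exact/hy/hx.
Qed.

Lemma Phi_comp n m p (x : DRhom n m) (y : DRhom m p) : DRvalid x -> DRvalid y ->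
  Phi p n (DRcomp y x) = IFcomp (Phi p m y) (Phi m n x).
Proof.
case: x => phi g; case: y => psi h.
rewrite /DRvalid /= => mono_phi mono_psi.
have preim_phi := IFdual_fib_preim mono_phi.
rewrite /DRcomp /Phi /=; case: h => /=; last first.
  by rewrite IFdual_comp //; case: g => //=; rewrite IFcompA.
rewrite (_ : [ffun i => _] = [ffun i => psi (rev_conj phi i)]); last first.
  by apply/ffunP => i; rewrite !ffunE.
have mono_phi' := monotone_rev_conj mono_phi.
have preim_phi' := IFdual_fib_preim mono_phi'.
rewrite IFdual_comp //; case: g => /=.
  rewrite (IFcompA _ _ (@fib_preim_rho m)) -(IFcompA _ _ preim_phi) IFdual_rev_conj //.
  by rewrite (IFcompA _ _ (@fib_preim_rho n)) rhoK IFcompf1.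
by rewrite (IFcompA _ _ (@fib_preim_rho m)) IFdual_rev_conj // -(IFcompA _ _ preim_phi').
Qed.

Lemma filter_iota_interval N s c : s + c <= N ->
  [seq z <- iota 0 N | s <= z < s + c] = iota s c.
Proof.
move=> h; rewrite (_ : N = s + (c + (N - s - c))); last by lia.
rewrite !iotaD !filter_cat add0n.
rewrite (@eq_in_filter _ _ pred0); last by move=> z; rewrite mem_iota /=; lia.
rewrite (@eq_in_filter _ _ predT (iota s c)); last by move=> z; rewrite mem_iota /=; lia.
rewrite (@eq_in_filter _ _ pred0 (iota (s + c) _)); last by move=> z; rewrite mem_iota /=; lia.
by rewrite !filter_pred0 filter_predT cats0.
Qed.

Lemma natfib_iota n m (f : 'I_n.+1 -> 'I_m.+1) l s c :
  (forall z, z < n.+1 -> (f (inord z) == l) = (s <= z < s + c)) -> s + c <= n.+1 ->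
  natfib f l = map inord (iota s c).
Proof.
move=> hf hsc; apply: (inj_map val_inj).
rewrite -map_comp (_ : map _ (iota s c) = iota s c); last first.
  rewrite -[RHS]map_id; apply/eq_in_map => z; rewrite mem_iota => hz /=; rewrite inordK //; lia.
rewrite -(filter_iota_interval hsc) /natfib ffunE.
rewrite (@eq_filter _ _ (preim val (fun z => s <= z < s + c))); last first.
  by move=> k /=; rewrite -hf // inord_val.
by rewrite -filter_map val_enum_ord.
Qed.

Section DualNaturalFibres.
Variables (a b : nat) (phi : {ffun 'I_a.+1 -> 'I_b.+1}).
Hypothesis mono_phi : monotone phi.

Lemma IFdual_map (f : 'I_b.+1 -> 'I_a.+1) :
  (forall j : 'I_b.+1, val j \in dual_fib phi (f j)) -> ifmap (IFdual phi) = [ffun j => f j].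
Proof.
move=> hf; apply/ffunP => j; rewrite !ffunE; apply: val_inj.
rewrite /= inordK; last by rewrite ltnS dual_index_le.
by apply/eqP; rewrite dual_indexP //; [exact: hf | rewrite -ltnS].
Qed.

Lemma dual_fib_interval l : l <= a -> (0 < l \/ val (phi (inord a)) = b) ->
  exists s c, dual_fib phi l = iota s c /\ s + c <= b.+1.
Proof.
move=> hl; have phi_le x : phi (inord x) <= b by rewrite -ltnS ltn_ord.
have [->|lp] := posnP l => h.
  have e : val (phi (inord a)) = b by case: h.
  by exists 0, (phi (inord 0)).+1; rewrite dual_fib0 e subnn /= ltnS.
exists (phi (inord l.-1)).+1, (phi (inord l) - phi (inord l.-1)).
rewrite dual_fibE; last by lia.
split => //.
have := monotone_inord mono_phi (leq_pred l) hl; have := phi_le l; lia.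
Qed.

(* Outside the wrap-around fibre (over 0, unless phi a = b) the dual fibres are
   intervals of [b], hence listed in their natural order. *)
Lemma IFdual_natfib (f : 'I_b.+1 -> 'I_a.+1) (l : 'I_a.+1) :
  ifmap (IFdual phi) = [ffun j => f j] -> (0 < l \/ val (phi (inord a)) = b) ->
  iffib (IFdual phi) l = natfib f l.
Proof.
move=> hf hl; have [s [c [e hsc]]] := dual_fib_interval (ltn_ord l : (l : nat) <= a) hl.
rewrite [LHS]ffunE e; symmetry; apply: natfib_iota => // z hz.
have -> : f (inord z) = ifmap (IFdual phi) (inord z) by rewrite hf ffunE.
rewrite -(IFdual_fib_preim mono_phi) /= ffunE mem_map_inord => [|y]; last exact: dual_fib_lt.
by rewrite /= inordK // e mem_iota.
Qed.

End DualNaturalFibres.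

Lemma monotone_id n : monotone [ffun i : 'I_n.+1 => i].
Proof. by move=> i j; rewrite !ffunE. Qed.

Lemma IFdual_id n : IFdual [ffun i : 'I_n.+1 => i] = IFid n.
Proof.
have fibE : iffib (IFdual [ffun i : 'I_n.+1 => i]) = iffib (IFid n).
  apply/ffunP => l; rewrite !ffunE; have [l0|lp] := posnP (l : nat).
    rewrite l0 dual_fib0 !ffunE !inordK // subnn /=.
    by congr [:: _]; apply: val_inj; rewrite /= l0 inordK.
  rewrite dual_fibE; last by rewrite lp -ltnS ltn_ord.
  rewrite !ffunE !inordK; try by have := ltn_ord l; lia.
  by rewrite (_ : l - l.-1 = 1) /= ?prednK ?inord_val //; lia.
rewrite [LHS]IFhomE [RHS]IFhomE; congr IFHom => //.
apply: fib_preim_ifmap fibE; last exact: fib_preim_id.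
exact/IFdual_fib_preim/monotone_id.
Qed.

Section Coface.
Variables (k : nat) (i : 'I_k.+2).

Let phi : {ffun 'I_k.+1 -> 'I_k.+2} := drphi (delta i).

Let phi_inord x : x <= k -> val (phi (inord x)) = bump i x.
Proof. by move=> hx; rewrite /phi /= ffunE /= inordK. Qed.

Lemma monotone_delta : monotone phi.
Proof. by move=> x y hxy; rewrite /phi /= !ffunE /= /bump; lia. Qed.

Let eq_ord_max m (x : 'I_m.+1) : (x == ord_max) = ((x : nat) == m).
Proof. by rewrite -(inj_eq val_inj). Qed.

Lemma dmap_val j : (dmap i j : nat) =
  if (i : nat) == k.+1 then (if (j : nat) == k.+1 then 0 else (j : nat))
  else (if j <= i then (j : nat) else (j : nat).-1).
Proof.
have hj := ltn_ord j; have hi := ltn_ord i.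
rewrite /dmap !eq_ord_max; case: eqP => ei.
  by case: eqP => ej //=; rewrite inordK //=; lia.
by case: ifP => hji; rewrite inordK //=; lia.
Qed.

Lemma IFdual_delta_map : ifmap (IFdual phi) = [ffun j => dmap i j].
Proof.
apply: IFdual_map; first exact: monotone_delta.
move=> j; have hj := ltn_ord j; have hi := ltn_ord i.
rewrite mem_dual_fib //; last by rewrite -ltnS ltn_ord.
have := ltn_ord (dmap i j); rewrite dmap_val /=.
case: eqP => ei; last first.
  by case: ifP => hji hd; case: eqP => l0; rewrite !phi_inord /bump; lia.
case: eqP => ej hd; first by rewrite eqxx phi_inord // /bump; lia.
by case: eqP => l0; rewrite !phi_inord /bump; lia.
Qed.

Lemma IFdual_delta : IFdual phi = dface i.
Proof.
rewrite [LHS]IFhomE /dface IFdual_delta_map; congr IFHom.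
have hik := ltn_ord i.
have natfibE (l : 'I_k.+1) : (0 < l \/ val (phi (inord k)) = k.+1) ->
    iffib (IFdual phi) l = natfib (dmap i) l.
  by apply: IFdual_natfib; [exact: monotone_delta | exact: IFdual_delta_map].
case: eqP => [ei|ni]; apply/ffunP => l; last first.
  by apply: natfibE; right; rewrite phi_inord //= /bump; move/eqP: ni; rewrite eq_ord_max; lia.
rewrite [RHS]ffunE; case: eqP => [->|l0]; last first.
  by apply: natfibE; left; rewrite lt0n; apply: contra_notN l0 => /eqP l0; apply: val_inj.
move/eqP: ei; rewrite eq_ord_max => /eqP ei.
rewrite ffunE dual_fib0 !phi_inord // /bump ei /= ltnn subSnn /=.
by congr [:: _; _]; apply: val_inj; rewrite /= inordK.
Qed.

End Coface.

Section Codegeneracy.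
Variables (n : nat) (j : 'I_n.+1).

Let phi : {ffun 'I_n.+2 -> 'I_n.+1} := drphi (sigma j).

Let phi_inord x : x <= n.+1 -> val (phi (inord x)) = unbump j x.
Proof.
move=> hx; rewrite /phi /= ffunE /= !inordK //; have := ltn_ord j; rewrite /unbump; lia.
Qed.

Lemma monotone_sigma : monotone phi.
Proof.
move=> x y hxy; have := ltn_ord x; have := ltn_ord y => hy hx.
by rewrite -(inord_val x) -(inord_val y) !phi_inord /unbump; lia.
Qed.

Lemma IFdual_sigma_map : ifmap (IFdual phi) = [ffun k => smap j k].
Proof.
apply: IFdual_map; first exact: monotone_sigma.
move=> k; have hj := ltn_ord j; have hk := ltn_ord k.
rewrite mem_dual_fib //; last by rewrite -ltnS ltn_ord.
rewrite /smap /=.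
by case: eqP => e; rewrite !phi_inord /unbump /=; move: e; rewrite /bump; lia.
Qed.

Lemma IFdual_sigma : IFdual phi = sdeg j.
Proof.
rewrite [LHS]IFhomE /sdeg IFdual_sigma_map; congr IFHom.
apply/ffunP => l; apply: IFdual_natfib; [exact: monotone_sigma | exact: IFdual_sigma_map |].
by right; rewrite phi_inord // /unbump; have := ltn_ord j; lia.
Qed.

End Codegeneracy.

Lemma IFdual_valid a b (phi : {ffun 'I_a.+1 -> 'I_b.+1}) :
  monotone phi -> IGvalid (IFdual phi).
Proof.
move=> hm; split; first by move=> i; split; [apply: IFdual_uniq | apply: IFdual_fib_preim].
by rewrite /= ffunE (_ : dual_index phi 0 = 0) //; apply: val_inj; rewrite /= inordK.
Qed.

Lemma IFdual_rho_valid a b (phi : {ffun 'I_a.+1 -> 'I_b.+1}) :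
  monotone phi -> IGvalid (IFcomp (IFdual phi) (rho a)).
Proof.
move=> hm; have [_ map0] := IFdual_valid hm; split; last first.
  by rewrite /= ffunE map0 ffunE /rhomap eqxx.
move=> i; split; last exact: fib_preim_comp (IFdual_fib_preim hm) (@fib_preim_rho a) i.
rewrite /= ffunE natfib_rho /= ffunE cats0 /star rev_uniq.
exact: IFdual_uniq.
Qed.

Lemma Phi_valid n m (x : DRhom m n) : DRvalid x -> IGvalid (Phi n m x).
Proof.
by case: x => phi [] hm; [apply: IFdual_rho_valid | apply: IFdual_valid].
Qed.

Lemma last_iota x s n : last x (iota s n.+1) = s + n.
Proof. by rewrite -addn1 iotaD last_cat. Qed.

Lemma map_val_inord n (s : seq nat) : (forall z, z \in s -> z < n.+1) ->
  map val (map (@inord n) s) = s.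
Proof.
move=> h; rewrite -map_comp -[RHS]map_id; apply/eq_in_map => z hz /=.
by rewrite inordK // h.
Qed.

(* phi 0 is the last element of the fibre over 0, and then each phi l is
   determined by phi (l-1) and the length of the fibre over l. *)
Lemma IFdual_inj a b (phi psi : {ffun 'I_a.+1 -> 'I_b.+1}) : monotone phi -> monotone psi ->
  IFdual phi = IFdual psi -> phi = psi.
Proof.
move=> h1 h2 E.
have fibE l : l <= a -> dual_fib phi l = dual_fib psi l.
  move=> hl; have := congr1 (fun f => iffib f (inord l)) E; rewrite /= !ffunE inordK //.
  by move/(congr1 (map val)); rewrite !map_val_inord // => z; apply: dual_fib_lt.
have key l : l <= a -> val (phi (inord l)) = psi (inord l).
  elim: l => [|l IH] hl.
    by have := congr1 (last 0) (fibE 0 (leq0n _)); rewrite !dual_fib0 !last_cat !last_iota.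
  have := congr1 size (fibE l.+1 hl); rewrite !dual_fibE // !size_iota /=.
  have := monotone_inord h1 (leqnSn l) hl; have := monotone_inord h2 (leqnSn l) hl.
  rewrite IH; [lia | lia].
apply/ffunP => x; apply: val_inj; rewrite -(inord_val x); apply: key.
by rewrite -ltnS ltn_ord.
Qed.

Lemma Phi_faithful n m (x x' : DRhom m n) : DRvalid x -> DRvalid x' ->
  Phi n m x = Phi n m x' -> x = x'.
Proof.
case: x => phi g; case: x' => phi' g'; rewrite /DRvalid /Phi /= => h1 h2.
case: g; case: g' => E.
- congr DRHom; apply: IFdual_inj => //.
  have := congr1 (fun f => IFcomp f (rho m)) E.
  by rewrite !(IFcompA _ _ (@fib_preim_rho m)) rhoK !IFcompf1.
- by have := congr1 (fun f => iflab f ord0) E; rewrite /= !ffunE.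
- by have := congr1 (fun f => iflab f ord0) E; rewrite /= !ffunE.
- by congr DRHom; apply: IFdual_inj.
Qed.

Lemma monotone_factor_delta a b (phi : {ffun 'I_a.+1 -> 'I_b.+2}) (y : 'I_b.+2) :
  monotone phi -> (forall x, phi x != y) ->
  exists2 psi : {ffun 'I_a.+1 -> 'I_b.+1}, monotone psi &
    phi = [ffun x => drphi (delta y) (psi x)].
Proof.
move=> hm hy; have ne x : nat_of_ord (phi x) != y by rewrite (inj_eq val_inj) hy.
pose psi := [ffun x => inord (unbump y (phi x)) : 'I_b.+1].
have psiE x : nat_of_ord (psi x) = unbump y (phi x).
  rewrite ffunE /= inordK //; have := ne x; have := ltn_ord (phi x).
  by have := ltn_ord y; rewrite /unbump; lia.
clearbody psi; exists psi => [u v huv|]; first by rewrite !psiE; have := hm u v huv; rewrite /unbump; lia.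
apply/ffunP => x; rewrite !ffunE; apply: val_inj; rewrite /= psiE.
by have := ne x; rewrite /bump /unbump; lia.
Qed.

Lemma monotone_factor_sigma a b (phi : {ffun 'I_a.+2 -> 'I_b.+1}) (j : 'I_a.+1) :
  monotone phi -> phi (inord j) = phi (inord j.+1) ->
  exists2 psi : {ffun 'I_a.+1 -> 'I_b.+1}, monotone psi &
    phi = [ffun k => psi (drphi (sigma j) k)].
Proof.
move=> hm ej; have hj := ltn_ord j.
exists [ffun k : 'I_a.+1 => phi (inord (bump j.+1 k))].
  move=> u v huv; rewrite !ffunE; apply: hm.
  have hu := ltn_ord u; have hv := ltn_ord v.
  by rewrite /bump !inordK; lia.
apply/ffunP => k; have hk := ltn_ord k; rewrite !ffunE inordK; last by rewrite /unbump; lia.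
have [kj|kj] := eqVneq (k : nat) j.+1.
  by rewrite (_ : bump j.+1 (unbump j k) = j) ?ej -?kj ?inord_val // /bump /unbump; lia.
by rewrite (_ : bump j.+1 (unbump j k) = k) ?inord_val // /bump /unbump; move: kj; lia.
Qed.

Lemma monotone_strict_surjective a b (phi : {ffun 'I_a.+1 -> 'I_b.+1}) :
  monotone phi -> (forall k, k < a -> phi (inord k) < phi (inord k.+1)) ->
  (forall y : 'I_b.+1, exists x, phi x = y) -> b = a /\ forall x, phi x = x :> nat.
Proof.
move=> hm hs surj.
have phi0 : nat_of_ord (phi (inord 0)) = 0.
  have [x hx] := surj ord0; have hxa : (x : nat) <= a by rewrite -ltnS ltn_ord.
  by have := monotone_inord hm (leq0n x) hxa; rewrite inord_val hx /=; lia.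
have phiS k : k < a -> nat_of_ord (phi (inord k.+1)) = (phi (inord k)).+1.
  move=> hk; have h1 := hs k hk; have h2 := ltn_ord (phi (inord k.+1)).
  have [x hx] := surj (inord (phi (inord k)).+1).
  have {}hx : nat_of_ord (phi x) = (phi (inord k)).+1 by rewrite hx inordK //; lia.
  have hxa : (x : nat) <= a by rewrite -ltnS ltn_ord.
  case: (leqP (x : nat) k) => hxk.
    by have := monotone_inord hm hxk (ltnW hk); rewrite inord_val hx; lia.
  by have := monotone_inord hm hxk hxa; rewrite inord_val hx; lia.
have phi_id k : k <= a -> nat_of_ord (phi (inord k)) = k.
  by elim: k => [|k IHk] hk //; rewrite phiS // IHk //; lia.
have phi_top : nat_of_ord (phi (inord a)) = b.
  have [x hx] := surj ord_max; have hxa : (x : nat) <= a by rewrite -ltnS ltn_ord.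
  have := monotone_inord hm hxa (leqnn a); rewrite inord_val hx /=.
  by have := ltn_ord (phi (inord a)); lia.
split; first by rewrite -phi_top phi_id.
by move=> x; rewrite -[in LHS](inord_val x) phi_id // -ltnS ltn_ord.
Qed.

(* A monotone map without repeated values is a composite of cofaces: if it
   misses y it factors through delta_y, and otherwise it is the identity. *)
Lemma Rgen_IFdual_strict a b (phi : {ffun 'I_a.+1 -> 'I_b.+1}) :
  (forall b' (psi : {ffun 'I_a.+1 -> 'I_b'.+1}), b' < b -> monotone psi -> Rgen (IFdual psi)) ->
  monotone phi -> (forall k, k < a -> phi (inord k) < phi (inord k.+1)) -> Rgen (IFdual phi).
Proof.
move=> IH hm hs.
have [/existsP[y /forallP hy]|/existsPn surj] :=
  boolP [exists y : 'I_b.+1, [forall x : 'I_a.+1, phi x != y]].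
  case: b IH phi hm hs y hy => [|b] IH phi hm hs y hy.
    by have := hy ord0; rewrite (ord1 (phi ord0)) (ord1 y) eqxx.
  have [psi mono_psi ->] := monotone_factor_delta hm hy.
  rewrite IFdual_comp //; last exact: monotone_delta.
  by rewrite IFdual_delta; apply: Rgen_comp (Rgen_d _) (IH _ _ _ mono_psi).
have [|eab phi_id] := monotone_strict_surjective hm hs.
  move=> y; have /existsP[x /negPn/eqP hx] := surj y; by exists x.
subst b; have -> : phi = [ffun i => i] by apply/ffunP => x; apply: val_inj; rewrite ffunE; exact: phi_id.
rewrite IFdual_id; exact: Rgen_id.
Qed.

Lemma Rgen_IFdual a b (phi : {ffun 'I_a.+1 -> 'I_b.+1}) : monotone phi -> Rgen (IFdual phi).
Proof.
have [s] := ubnP (a + b); elim: s a b phi => // s IH a b phi hs hm.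
have IHb b' (psi : {ffun 'I_a.+1 -> 'I_b'.+1}) : b' < b -> monotone psi -> Rgen (IFdual psi).
  by move=> hb; apply: IH; lia.
case: a phi hs hm IHb => [|a] phi hs hm IHb; first by apply: Rgen_IFdual_strict.
have [/existsP[j /eqP ej]|/existsPn strict] :=
  boolP [exists j : 'I_a.+1, phi (inord j) == phi (inord j.+1)].
  have [psi mono_psi ->] := monotone_factor_sigma hm ej.
  rewrite IFdual_comp //; last exact: monotone_sigma.
  by rewrite IFdual_sigma; apply: Rgen_comp (Rgen_s _); apply: IH mono_psi; lia.
apply: Rgen_IFdual_strict => // k hk; have := strict (inord k); rewrite inordK //.
by rewrite ltn_neqAle (inj_eq val_inj) => ->; rewrite monotone_inord //; lia.
Qed.

Lemma Phi_refl n : Phi n n (refl n) = rho n.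
Proof. by rewrite /Phi /= IFdual_id IFcomp1f. Qed.

Lemma Rgen_Phi n m (x : DRhom m n) : DRvalid x -> Rgen (Phi n m x).
Proof.
case: x => phi [] hm; rewrite /Phi /=; last exact: Rgen_IFdual.
exact: Rgen_comp (Rgen_IFdual hm) (Rgen_rho m).
Qed.

Lemma Rgen_Phi_image n m (h : IFhom n m) : Rgen h -> exists x, DRvalid x /\ Phi n m x = h.
Proof.
elim=> {n m h} [n | k i | n j | n | n m p f g _ [x [vx <-]] _ [y [vy <-]]].
- by exists (DRid n); split; [exact: monotone_id | exact: IFdual_id].
- by exists (delta i); split; [exact: monotone_delta | exact: IFdual_delta].
- by exists (sigma j); split; [exact: monotone_sigma | exact: IFdual_sigma].
- by exists (refl n); split; [exact: monotone_id | exact: Phi_refl].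
- by exists (DRcomp x y); split; [exact: DRcomp_valid | exact: Phi_comp].
Qed.

Theorem mainTheorem4 :
  exists Phi : forall n m : nat, DRhom m n -> IFhom n m,
    (* Phi lands in IΓ(as) *)
    (forall n m (x : DRhom m n), DRvalid x -> IGvalid (Phi n m x)) /\
    (* Phi is a (contravariant) functor, identity on objects *)
    (forall n, Phi n n (DRid n) = IFid n) /\
    (forall n m p (x : DRhom n m) (y : DRhom m p), DRvalid x -> DRvalid y ->
       Phi p n (DRcomp y x) = IFcomp (Phi p m y) (Phi m n x)) /\
    (* faithful *)
    (forall n m (x x' : DRhom m n), DRvalid x -> DRvalid x' ->
       Phi n m x = Phi n m x' -> x = x') /\
    (* values on generators *)
    (forall k (i : 'I_k.+2), Phi k.+1 k (delta i) = dface i) /\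
    (forall n (j : 'I_n.+1), Phi n n.+1 (sigma j) = sdeg j) /\
    (forall n, Phi n n (refl n) = rho n) /\
    (* the image of Phi is exactly the subcategory R generated by d_i, s_j, rho_n *)
    (forall n m (h : IFhom n m), Rgen h <-> exists x, DRvalid x /\ Phi n m x = h).
Proof.
exists Phi; split; first exact: Phi_valid.
split; first exact: IFdual_id.
split; first exact: Phi_comp.
split; first exact: Phi_faithful.
split; first exact: IFdual_delta.
split; first exact: IFdual_sigma.
split; first exact: Phi_refl.
move=> n m h; split; first exact: Rgen_Phi_image.
by case=> x [vx <-]; apply: Rgen_Phi.
Qed.
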